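(* In the setting described in the context, let $(\hat{\boldsymbol\beta},\hat\alpha,\hat{\boldsymbol z},\hat{\boldsymbol l})$ be an optimal solution of the restricted problem (R$_T$), with optimal value $\widehat{\mathsf{Obj}}_{T+1}$. Then (1) $\widehat{\mathsf{Obj}}_{T+1}\le\mathsf{Obj}$; and (2) if $S(\hat{\boldsymbol\beta})=S(\boldsymbol\beta^{(t)})$ for some $t\in[T]$, then $(\hat{\boldsymbol\beta},\hat\alpha,\hat{\boldsymbol z},\hat{\boldsymbol l})$ is also an optimal solution of (MIP$_M$).
   Context: Let $\boldsymbol y\in\mathbb R^n$, $\boldsymbol X\in\mathbb R^{n\times p}$, $\lambda,\lambda_0\ge0$, $M>0$. The columns are partitioned into categorical blocks $\mathcal I_j=\{s_j,\dots,s_j+p_j-1\}$, $j\in[q]$, and possibly further continuous columns. Problem (MIP$_M$): minimise $\frac1n\|\boldsymbol y-\boldsymbol X\boldsymbol\beta-\alpha\mathbf 1\|_2^2+\lambda_0\sum_{i=1}^pz_i+\lambda\sum_{i=1}^pl_i$ over $\boldsymbol\beta\in\mathbb R^p,\alpha\in\mathbb R$, $z_i,l_i\in\{0,1\}$ ($i\in[p]$), $z^j_{i,k}\in\{0,1\}$ ($j\in[q]$, $s_j\le k<i\le s_j+p_j-1$), subject to $|\beta_i|\le Mz_i$ ($i\in[p]$); $|\beta_k-\beta_i|\le2Mz^j_{i,k}$ ($j\in[q]$, $s_j\le k\le i-1$, $s_j\le i\le s_j+p_j-1$); and $\sum_{k=s_j}^{i-1}z^j_{i,k}-(i-s_j-1)\le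 l_i$ ($j\in[q]$, $s_j\le i\le s_j+p_j-1$). Its optimal value is $\mathsf{Obj}$. Let $\boldsymbol\beta^{(1)},\dots,\boldsymbol\beta^{(T)}$ be the $\boldsymbol\beta$-parts of $T\ge1$ feasible solutions of (MIP$_M$), and $S_t=\{j\in[q]:\beta^{(t)}_i\ne0\text{ for some }i\in\mathcal I_j\}$. The restricted problem (R$_T$) is (MIP$_M$) with the constraints $|\beta_k-\beta_i|\le2Mz^j_{i,k}$ imposed only for $j\in\bigcup_{t\in[T]}S_t$ (all other constraints kept). $S(\boldsymbol\beta)=\{i:\beta_i\ne0\}$ is the support. *)

(* Indices are 0-based: columns are 'I_p, blocks 'I_q,
   block j occupies the columns s j, ..., s j + pj j - 1. *)
From HB Require Import structures.
From mathcomp Require Import all_boot all_order all_algebra.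
Set Implicit Arguments. Unset Strict Implicit. Unset Printing Implicit Defensive.
Import Order.TTheory GRing.Theory Num.Theory.
Local Open Scope ring_scope.

Section MIP.
Variables (R : realFieldType) (n p q : nat).
Variables (y : 'I_n -> R) (X : 'I_n -> 'I_p -> R).
Variables (lam lam0 M : R).
Variables (s pj : 'I_q -> nat).

Definition in_block (j : 'I_q) (i : nat) : bool := (s j <= i < s j + pj j)%N.

(* A candidate solution: beta, alpha, z, l, and the pairwise indicators
   zz j i k (only used for s_j <= k < i in block j). *)
Record sol := Sol {
  s_beta : 'I_p -> R;
  s_alpha : R;
  s_z : 'I_p -> bool;
  s_l : 'I_p -> bool;
  s_zz : 'I_q -> 'I_p -> 'I_p -> bool }.

Definition objective (x : sol) : R :=
  n%:R^-1 * \sum_(r < n) (y r - \sum_(i < p) X r i * s_beta x i - s_alpha x) ^+ 2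
  + lam0 * \sum_(i < p) (s_z x i : nat)%:R
  + lam * \sum_(i < p) (s_l x i : nat)%:R.

(* Feasibility for the problem where the fusion constraints
   |beta_k - beta_i| <= 2 M z^j_{i,k} are imposed only for blocks j in J.
   J = predT gives (MIP_M). *)
Definition feasible (J : pred 'I_q) (x : sol) : Prop :=
  [/\ (forall i : 'I_p, `|s_beta x i| <= M * (s_z x i : nat)%:R),
      (forall (j : 'I_q) (i k : 'I_p), J j -> in_block j i -> (s j <= k < i)%N ->
          `|s_beta x k - s_beta x i| <= 2 * M * (s_zz x j i k : nat)%:R) &
      (forall (j : 'I_q) (i : 'I_p), in_block j i ->
          \sum_(k < p | (s j <= k < i)%N) ((s_zz x j i k : nat)%:R : R)
            - ((i : nat)%:R - (s j)%:R - 1) <= (s_l x i : nat)%:R)].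

Definition optimal (J : pred 'I_q) (x : sol) : Prop :=
  feasible J x /\ forall x' : sol, feasible J x' -> objective x <= objective x'.

Definition group_support (b : 'I_p -> R) : pred 'I_q :=
  fun j => [exists i : 'I_p, in_block j i && (b i != 0)].

Definition supp (b : 'I_p -> R) : {set 'I_p} := [set i | b i != 0].

End MIP.

(* (R_T) only drops constraints of (MIP_M), so it is a relaxation and its
   optimum is a lower bound for Obj.  If S(hat beta) = S(beta^(t)), then
   hat beta vanishes on every block outside the group support of beta^(t);
   on such a block the dropped fusion constraints hold with both sides
   zero, so the relaxed optimum is feasible, hence optimal, for (MIP_M). *)
From Pilot Require Import Defs.
From mathcomp Require Import all_boot all_order all_algebra.
Set Implicit Arguments. Unset Strict Implicit. Unset Printing Implicit Defensive.
Import Order.TTheory GRing.Theory Num.Theory.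
Local Open Scope ring_scope.

Section Relaxation.
Variables (R : realFieldType) (n p q : nat).
Variables (y : 'I_n -> R) (X : 'I_n -> 'I_p -> R) (lam lam0 M : R).
Variables (s pj : 'I_q -> nat).

Local Notation feasible := (feasible M s pj).
Local Notation optimal := (optimal y X lam lam0 M s pj).
Local Notation objective := (objective y X lam lam0).
Local Notation in_block := (in_block s pj).
Local Notation group_support := (group_support s pj).

Lemma feasible_sub (J J' : pred 'I_q) (x : sol R p q) :
  {subset J <= J'} -> feasible J' x -> feasible J x.
Proof. by move=> sJJ' [? Hfuse ?]; split=> // j i k /sJJ'; exact: Hfuse. Qed.

Lemma optimal_relaxation_le (J : pred 'I_q) (x x' : sol R p q) :
  optimal J x -> feasible predT x' -> objective x <= objective x'.
Proof. by move=> [_ Hopt] Hx'; apply: Hopt; apply: feasible_sub Hx'. Qed.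

Lemma feasible_optimal (J : pred 'I_q) (x : sol R p q) :
  optimal J x -> feasible predT x -> optimal predT x.
Proof. by move=> Hx Hfeas; split=> // x'; exact: optimal_relaxation_le Hx. Qed.

Lemma in_block_lower (j : 'I_q) (i k : nat) :
  in_block j i -> (s j <= k < i)%N -> in_block j k.
Proof. by rewrite /Defs.in_block => /andP[_ ilt] /andP[-> /ltn_trans->]. Qed.

Lemma group_supportPn (b : 'I_p -> R) (j : 'I_q) (i : 'I_p) :
  ~~ group_support b j -> in_block j i -> b i = 0.
Proof. by move=> /existsPn/(_ i); rewrite negb_and => /orP[/negP|/negPn/eqP]. Qed.

Lemma group_support_supp (b b' : 'I_p -> R) :
  supp b = supp b' -> group_support b =1 group_support b'.
Proof.
move=> eq_supp j; apply: eq_existsb => i; congr (_ && _).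
by have := congr1 (fun A : {set 'I_p} => i \in A) eq_supp; rewrite !inE.
Qed.

Lemma feasible_vanishing_blocks (J : pred 'I_q) (x : sol R p q) :
  0 <= M ->
  (forall (j : 'I_q) (i : 'I_p), ~~ J j -> in_block j i -> s_beta x i = 0) ->
  feasible J x -> feasible predT x.
Proof.
move=> M_ge0 Hvanish [? Hfuse ?]; split=> // j i k _ ji ki.
have [Jj|nJj] := boolP (J j); first exact: Hfuse.
rewrite (Hvanish j i) // (Hvanish j k) //; last exact: in_block_lower ki.
by rewrite subr0 normr0 !mulr_ge0.
Qed.

End Relaxation.

Theorem proposition3 (R : realFieldType) (n p q : nat)
  (y : 'I_n -> R) (X : 'I_n -> 'I_p -> R) (lam lam0 M : R)
  (s pj : 'I_q -> nat)
  (Hlam : 0 <= lam) (Hlam0 : 0 <= lam0) (HM : 0 < M)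
  (Hrange : forall j : 'I_q, (s j + pj j <= p)%N)
  (Hdisj : forall (j j' : 'I_q) (i : nat),
      in_block s pj j i -> in_block s pj j' i -> j = j')
  (T : nat) (HT : (0 < T)%N) (betas : 'I_T -> 'I_p -> R)
  (Hbetas : forall t : 'I_T, exists x : sol R p q,
      feasible M s pj predT x /\ s_beta x = betas t)
  (xhat : sol R p q) :
  let JT : pred 'I_q := fun j => [exists t : 'I_T, group_support s pj (betas t) j] in
  optimal y X lam lam0 M s pj JT xhat ->
  (forall x : sol R p q, feasible M s pj predT x ->
      objective y X lam lam0 xhat <= objective y X lam lam0 x)
  /\ ((exists t : 'I_T, supp (s_beta xhat) = supp (betas t)) ->
      optimal y X lam lam0 M s pj predT xhat).
Proof.
move=> JT Hopt; split=> [x|[t supp_eq]]; first exact: optimal_relaxation_le Hopt.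
apply: (feasible_optimal Hopt).
apply: feasible_vanishing_blocks (ltW HM) _ Hopt.1 => j i JTj ji.
apply: group_supportPn ji; rewrite (group_support_supp s pj supp_eq).
by apply: contra JTj => supp_t; apply/existsP; exists t.
Qed.
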